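(* The Petersen graph $P$ satisfies $\alpha_{\mathrm{od}}(P)=3$ and $\chi_{\mathrm{so}}(P)=6$. Moreover, every odd independent set of $P$ with at least two vertices equals the neighborhood $N(v)$ of some vertex $v$.
   Context: An odd independent set in $G=(V,E)$ is an independent set $S$ such that every $v\in V\setminus S$ has either no neighbor or an odd number of neighbors in $S$; $\alpha_{\mathrm{od}}(G)$ is its maximum size. A strong odd coloring is a proper coloring such that for each vertex $v$ every color on $N(v)$ occurs an odd number of times on $N(v)$; $\chi_{\mathrm{so}}(G)$ is the minimum number of colors. $N(v)$ is the open neighborhood. *)

From mathcomp Require Import all_boot.
Set Implicit Arguments. Unset Strict Implicit. Unset Printing Implicit Defensive.

(* A simple graph is a symmetric irreflexive relation e on a finite type T. *)
Section Graph.
Variables (T : finType) (e : rel T).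

Definition nbhd (v : T) : {set T} := [set u | e v u].

Definition independent (S : {set T}) : bool :=
  [forall x in S, forall y in S, ~~ e x y].

Definition odd_independent (S : {set T}) : bool :=
  independent S &&
  [forall v in ~: S, (#|nbhd v :&: S| == 0) || odd #|nbhd v :&: S|].

Definition alpha_od : nat := \max_(S : {set T} | odd_independent S) #|S|.

Definition strong_odd_coloring (k : nat) (c : T -> 'I_k) : Prop :=
  (forall x y, e x y -> c x != c y) /\
  (forall (v : T) (i : 'I_k),
     let m := #|[set u in nbhd v | c u == i]| in (m == 0) || odd m).

Definition so_colorable (k : nat) : Prop :=
  exists c : T -> 'I_k, strong_odd_coloring c.

Definition chi_so_eq (k : nat) : Prop :=
  so_colorable k /\ forall j, so_colorable j -> k <= j.
End Graph.

(* The Petersen graph as the Kneser graph K(5,2): vertices are the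
   2-subsets of {0,..,4}, adjacent iff disjoint. *)
Definition petersen_vertex := {A : {set 'I_5} | #|A| == 2}.
Definition petersen_adj : rel petersen_vertex :=
  fun A B => [disjoint val A & val B].

(* The Petersen graph is strongly regular with parameters (10, 3, 0, 1), and
   only these parameters are used.  If an odd independent set S contains two
   vertices x, y, their unique common neighbour w lies outside S and sees at
   least two, hence an odd number, hence all three of its neighbours in S; then
   every z in S is adjacent to w, for otherwise the common neighbour of z and w
   would be a neighbour of z in N(w), which is inside S.  So S = N(w); conversely
   N(w) is odd independent, since w sees 3 of its points and every other vertex
   outside it sees exactly 1.  The colour classes of a strong odd colouring are
   exactly odd independent sets; those of size at least 2 are neighbourhoods
   with pairwise adjacent centres, so there are at most two of them and a
   strong odd k-colouring has 10 <= k + 4.  Colouring N(u), N(w) for an edge uw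
   and the remaining 4 vertices individually uses 6 colours. *)

From mathcomp Require Import all_boot zify.
Set Implicit Arguments. Unset Strict Implicit. Unset Printing Implicit Defensive.

Section OddIndependentSets.
Variables (T : finType) (e : rel T).

Lemma in_nbhd x y : (y \in nbhd e x) = e x y.
Proof. by rewrite inE. Qed.

Lemma independentP (S : {set T}) :
  reflect {in S &, forall x y, ~~ e x y} (independent e S).
Proof.
apply: (iffP forall_inP) => [indS x y xS | indS x xS]; last first.
  by apply/forall_inP => y; apply: indS.
by have /forall_inP := indS x xS; apply.
Qed.

Lemma strong_odd_coloringP k (c : T -> 'I_k) :
  strong_odd_coloring e c <-> forall i, odd_independent e [set x | c x == i].
Proof.
have classE v i : nbhd e v :&: [set x | c x == i] = [set u in nbhd e v | c u == i].
  by apply/setP => u; rewrite !inE.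
split=> [[proper_c odd_c] i | odd_classes].
  apply/andP; split.
    apply/independentP => x y; rewrite !inE => /eqP cx /eqP cy.
    by apply/negP => /proper_c; rewrite cx cy eqxx.
  by apply/forall_inP => v _; rewrite classE; apply: odd_c.
split=> [x y exy | v i /=].
  apply/negP => /eqP cxy; have /andP[/independentP indC _] := odd_classes (c y).
  by move: (indC x y); rewrite !inE cxy eqxx exy => /(_ isT isT).
have /andP[/independentP indC /forall_inP oddC] := odd_classes i.
have [cv | ncv] := boolP (c v == i); last first.
  by rewrite -classE; apply: oddC; rewrite !inE.
(* v itself has colour i, so independence leaves it no neighbour of colour i *)
rewrite cards_eq0; apply/orP; left; apply/eqP/setP => u; rewrite !inE.
by apply/negP => /andP[evu cu]; move: (indC v u); rewrite !inE cv cu evu => /(_ isT isT).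
Qed.

Hypothesis e_irrefl : irreflexive e.

Lemma odd_independent_card_le1 (S : {set T}) : #|S| <= 1 -> odd_independent e S.
Proof.
move=> S_le1; have /card_le1_eqP S_eq := S_le1.
apply/andP; split.
  by apply/independentP => x y xS yS; rewrite (S_eq x y xS yS) e_irrefl.
apply/forall_inP => v _.
have : #|nbhd e v :&: S| <= 1 := leq_trans (subset_leq_card (subsetIr _ _)) S_le1.
by case: #|_| => [|[|]].
Qed.

Lemma so_colorable_disjoint (A B : {set T}) :
  [disjoint A & B] -> odd_independent e A -> odd_independent e B ->
  so_colorable e #|~: (A :|: B)|.+2.
Proof.
move=> AB oddA oddB; set R := ~: (A :|: B).
pose f v := if v \in A then 0 else if v \in B then 1 else (index v (enum R)).+2.
have f_lt v : f v < #|R|.+2.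
  rewrite /f; case: ifP => // vA; case: ifP => // vB.
  by rewrite !ltnS cardE index_mem mem_enum !inE vA vB.
pose c v : 'I_#|R|.+2 := inord (f v).
exists c; apply/strong_odd_coloringP => i.
have classE : [set x | c x == i] = [set x | f x == i].
  by apply/setP => x; rewrite !inE -val_eqE /= inordK.
rewrite classE; case: i {classE} => [[|[|n]] /= _].
- suff -> : [set x | f x == 0] = A by [].
  by apply/setP => x; rewrite !inE /f; case: ifP => //; case: ifP.
- suff -> : [set x | f x == 1] = B by [].
  apply/setP => x; rewrite !inE /f.
  by case: ifP => [xA | _]; [rewrite (disjointFr AB xA) | case: ifP].
- apply/odd_independent_card_le1/card_le1_eqP => x y; rewrite !inE /f.
  case: ifP => // xA; case: ifP => // xB; case: ifP => // yA; case: ifP => // yB.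
  move=> /eqP [<-] /eqP [idx_yx].
  have xR : x \in enum R by rewrite mem_enum !inE xA xB.
  have yR : y \in enum R by rewrite mem_enum !inE yA yB.
  by rewrite -(nth_index x yR) idx_yx nth_index.
Qed.

End OddIndependentSets.

(* Strongly regular graphs with parameters (n, 3, 0, 1), i.e. Moore graphs of
   degree 3 and diameter 2. *)
Section CubicMooreGraph.
Variables (T : finType) (e : rel T).
Hypothesis e_sym : symmetric e.
Hypothesis triangle_free : forall x y z, e x y -> e y z -> ~~ e x z.
Hypothesis card_nbhd : forall x, #|nbhd e x| = 3.
Hypothesis card_nbhdI :
  forall x y, x != y -> ~~ e x y -> #|nbhd e x :&: nbhd e y| = 1.

Lemma triangle_free_irreflexive : irreflexive e.
Proof. by move=> x; apply/negP => exx; move: (triangle_free exx exx); rewrite exx. Qed.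

Lemma common_nbhd x y : x != y -> ~~ e x y -> exists z, e x z && e y z.
Proof.
move=> xy nexy; have /card_gt0P[z] : 0 < #|nbhd e x :&: nbhd e y| by rewrite card_nbhdI.
by rewrite !inE; exists z.
Qed.

Lemma odd_independent_nbhd w : odd_independent e (nbhd e w).
Proof.
apply/andP; split.
  apply/independentP => x y; rewrite !in_nbhd => wx wy.
  by apply: triangle_free wy; rewrite e_sym.
apply/forall_inP => v; rewrite !inE => newv.
have [-> | vw] := eqVneq v w; first by rewrite setIid card_nbhd.
by rewrite card_nbhdI // e_sym.
Qed.

Lemma nbhd_maximal_independent S w :
  independent e S -> nbhd e w \subset S -> S = nbhd e w.
Proof.
move=> /independentP indS wS; apply/eqP; rewrite eqEsubset andbC wS /=.
apply/subsetP => z zS; rewrite in_nbhd; apply: contraT => newz.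
have [u /andP[wu zu]] : exists u, e w u && e z u.
  have [<- | wz] := eqVneq w z; last exact: common_nbhd.
  have /card_gt0P[u] : 0 < #|nbhd e w| by rewrite card_nbhd.
  by rewrite in_nbhd => wu; exists u; rewrite wu.
have uS : u \in S by apply: (subsetP wS); rewrite in_nbhd.
by move: (indS z u zS uS); rewrite zu.
Qed.

Lemma odd_independent_gt1_nbhd S :
  odd_independent e S -> 1 < #|S| -> exists w, S = nbhd e w.
Proof.
move=> /andP[indS /forall_inP oddS] /card_gt1P[x [y [xS yS xy]]].
have /independentP ind := indS.
have [w /andP[xw yw]] := common_nbhd xy (ind x y xS yS).
have wS : w \notin S by apply: contraL xw => wS; exact: ind.
have gt1 : 1 < #|nbhd e w :&: S|.
  by apply/card_gt1P; exists x, y; rewrite !inE ![e w _]e_sym xw yw xS yS.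
have le3 : #|nbhd e w :&: S| <= 3 by rewrite -(card_nbhd w) subset_leq_card ?subsetIl.
have eq3 : #|nbhd e w :&: S| = 3.
  move: (oddS w) gt1 le3; rewrite inE wS => /(_ isT).
  by case: #|_| => [|[|[|[|]]]].
exists w; apply: nbhd_maximal_independent => //; apply/setIidPl/eqP.
by rewrite eqEcard subsetIl eq3 card_nbhd.
Qed.

Lemma alpha_od_cubic_moore (x0 : T) : alpha_od e = 3.
Proof.
apply/eqP; rewrite eqn_leq; apply/andP; split.
  apply/bigmax_leqP => S oddS; have [S_le1 | S_gt1] := leqP #|S| 1.
    exact: leq_trans S_le1 _.
  by have [w ->] := odd_independent_gt1_nbhd oddS S_gt1; rewrite card_nbhd.
by rewrite -(card_nbhd x0) (leq_bigmax_cond _ (odd_independent_nbhd x0)).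
Qed.

Lemma disjoint_nbhd_adj w w' : [disjoint nbhd e w & nbhd e w'] -> e w w'.
Proof.
move=> /disjoint_setI0 ww'; apply: contraT => neww'.
have : 0 < #|nbhd e w :&: nbhd e w'|.
  by have [<- | /card_nbhdI ->] := eqVneq w w'; rewrite ?setIid ?card_nbhd.
by rewrite ww' cards0.
Qed.

Lemma so_colorable_card_le j : so_colorable e j -> #|T| <= j + 4.
Proof.
move=> [c /strong_odd_coloringP oddC].
pose C i := [set x | c x == i].
have disjC i i' : i != i' -> [disjoint C i & C i'].
  move=> ii'; rewrite -setI_eq0; apply/eqP/setP => x; rewrite !inE.
  by apply/negP => /andP[/eqP cx /eqP cx']; rewrite -cx -cx' eqxx in ii'.
pose B := [set i | 1 < #|C i|].
have centre i : i \in B -> exists w, C i = nbhd e w.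
  by rewrite inE; apply: odd_independent_gt1_nbhd (oddC i).
have card_B : #|B| <= 2.
  rewrite leqNgt; apply/negP => /card_gt2P[i1 [i2 [i3 [[B1 B2 B3] [i12 i23 i31]]]]].
  have [[w1 C1] [w2 C2] [w3 C3]] := And3 (centre _ B1) (centre _ B2) (centre _ B3).
  have w12 : e w1 w2 by apply: disjoint_nbhd_adj; rewrite -C1 -C2 disjC.
  have w23 : e w2 w3 by apply: disjoint_nbhd_adj; rewrite -C2 -C3 disjC.
  have w13 : e w1 w3 by apply: disjoint_nbhd_adj; rewrite -C1 -C3 disjC // eq_sym.
  by move: (triangle_free w12 w23); rewrite w13.
have card_C i : #|C i| <= 1 + (if i \in B then 2 else 0).
  case: ifP => [/centre[w ->] | ]; first by rewrite card_nbhd.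
  by rewrite inE addn0 => /negbT; rewrite -leqNgt.
have -> : #|T| = \sum_(i < j) #|C i|.
  rewrite -sum1_card (partition_big c predT) //=.
  by apply: eq_bigr => i _; rewrite -sum1_card; apply: eq_bigl => x; rewrite !inE.
have : \sum_(i < j) #|C i| <= \sum_(i < j) (1 + (if i \in B then 2 else 0)).
  by apply: leq_sum => i _; apply: card_C.
rewrite big_split /= -big_mkcond !sum_nat_const card_ord; lia.
Qed.

Lemma so_colorable_edge u w : e u w -> so_colorable e (#|T| - 4).
Proof.
move=> uw.
have disj : [disjoint nbhd e u & nbhd e w].
  rewrite -setI_eq0; apply/eqP/setP => x; rewrite !inE.
  by apply/negP => /andP[ux wx]; move: (triangle_free uw wx); rewrite ux.
have card_T : #|T| = (#|~: (nbhd e u :|: nbhd e w)|).+2 + 4.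
  rewrite -(cardsC (nbhd e u :|: nbhd e w)) cardsU (disjoint_setI0 disj).
  by rewrite !card_nbhd cards0; lia.
rewrite card_T addnK; apply: so_colorable_disjoint disj _ _.
- exact: triangle_free_irreflexive.
- exact: odd_independent_nbhd.
- exact: odd_independent_nbhd.
Qed.

Lemma chi_so_cubic_moore (x0 : T) : chi_so_eq e (#|T| - 4).
Proof.
split=> [ | j /so_colorable_card_le]; last lia.
have /card_gt0P[w] : 0 < #|nbhd e x0| by rewrite card_nbhd.
by rewrite in_nbhd; apply: so_colorable_edge.
Qed.

End CubicMooreGraph.

Notation P := petersen_adj.

Lemma card_petersen_vertex (v : petersen_vertex) : #|val v| = 2.
Proof. exact: eqP (valP v). Qed.

Lemma card_petersen_sub (X : {set 'I_5}) :
  #|[set v : petersen_vertex | val v \subset X]| = 'C(#|X|, 2).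
Proof.
rewrite -cards_draws -(card_imset _ val_inj); apply: eq_card => B.
rewrite inE; apply/imsetP/andP => [[v] | [BX B2]].
  by rewrite inE => vX ->; rewrite vX card_petersen_vertex.
by exists (Sub B B2); rewrite ?inE SubK.
Qed.

Lemma petersen_nbhdI (v w : petersen_vertex) :
  nbhd P v :&: nbhd P w =
  [set u : petersen_vertex | val u \subset ~: (val v :|: val w)].
Proof.
apply/setP => u; rewrite !inE setCU subsetI -!disjoints_subset.
by rewrite ![[disjoint val u & _]]disjoint_sym.
Qed.

Lemma card_petersen_nbhdI (v w : petersen_vertex) :
  #|nbhd P v :&: nbhd P w| = 'C(5 - #|val v :|: val w|, 2).
Proof. by rewrite petersen_nbhdI card_petersen_sub cardsCs setCK card_ord. Qed.

Lemma card_petersen : #|{: petersen_vertex}| = 10.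
Proof.
transitivity 'C(#|[set: 'I_5]|, 2); last by rewrite cardsT card_ord.
by rewrite -card_petersen_sub; apply: eq_card => v; rewrite !inE subsetT.
Qed.

Lemma petersen_sym : symmetric P.
Proof. by move=> v w; rewrite /P disjoint_sym. Qed.

(* Three pairwise disjoint 2-subsets would need six points. *)
Lemma petersen_triangle_free (x y z : petersen_vertex) : P x y -> P y z -> ~~ P x z.
Proof.
move=> /disjoint_setI0 xy /disjoint_setI0 yz; apply/negP => /disjoint_setI0 xz.
have := max_card (mem (val x :|: val y :|: val z)).
rewrite card_ord !cardsU setIUl xy xz [val y :&: _]yz setU0 cards0.
by rewrite !card_petersen_vertex.
Qed.

Lemma card_petersen_nbhd (v : petersen_vertex) : #|nbhd P v| = 3.
Proof.
by rewrite -[nbhd P v]setIid card_petersen_nbhdI setUid card_petersen_vertex.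
Qed.

(* Distinct intersecting 2-subsets meet in exactly one point, so their union
   leaves a single 2-subset uncovered. *)
Lemma card_petersen_nbhdI1 (v w : petersen_vertex) :
  v != w -> ~~ P v w -> #|nbhd P v :&: nbhd P w| = 1.
Proof.
move=> vw nPvw; rewrite card_petersen_nbhdI cardsU !card_petersen_vertex.
have meet_pos : 0 < #|val v :&: val w| by rewrite card_gt0 setI_eq0.
have meet_lt2 : #|val v :&: val w| < 2.
  rewrite ltnNge; apply: contra vw => meet2; apply/eqP/val_inj.
  have eqv : val v :&: val w = val v.
    by apply/eqP; rewrite eqEcard subsetIl card_petersen_vertex.
  have eqw : val v :&: val w = val w.
    by apply/eqP; rewrite eqEcard subsetIr card_petersen_vertex.
  by rewrite -{1}eqv eqw.
by have -> : #|val v :&: val w| = 1 by lia.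
Qed.

Definition petersen_vertex0 : petersen_vertex.
Proof. by exists [set ord0; ord_max]; rewrite cards2. Defined.

Theorem proposition8 :
  [/\ alpha_od petersen_adj = 3,
      chi_so_eq petersen_adj 6 &
      forall S : {set petersen_vertex},
        odd_independent petersen_adj S -> 2 <= #|S| ->
        exists v : petersen_vertex, S = nbhd petersen_adj v].
Proof.
split; last by move=> S; apply: (odd_independent_gt1_nbhd petersen_sym
                          card_petersen_nbhd card_petersen_nbhdI1).
  exact: (alpha_od_cubic_moore petersen_sym petersen_triangle_free
            card_petersen_nbhd card_petersen_nbhdI1 petersen_vertex0).
rewrite -[6]/(10 - 4) -card_petersen.
exact: (chi_so_cubic_moore petersen_sym petersen_triangle_free
          card_petersen_nbhd card_petersen_nbhdI1 petersen_vertex0).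
Qed.
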